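(* Let $t\ge3$ be an integer. Every $t$-mansion is $(2P_3,C_4,C_6,C_7,T_0)$-free and contains an induced $t$-pentagon. Moreover, every $t$-mansion is anticonnected and contains no simplicial and no universal vertices.
   Context: Graphs are finite, simple, nonnull. A graph is $(H_1,\dots,H_m)$-free if it has no induced subgraph isomorphic to any $H_i$. $P_k$, $C_k$ are the path and cycle on $k$ vertices; $2P_3$ is two disjoint copies of $P_3$. $T_0$ is the graph with vertices $p,q,u_0,u_1,u_2,u_3,w_1,w_2,w_3$ and edges $pq,pu_0,pu_2,pu_3,qu_1,qu_2,qu_3,u_0w_1,u_1w_1,u_2w_2,u_3w_3,w_1w_2,w_1w_3,w_2w_3$. For $t\ge3$ the $t$-pentagon is the graph on vertices $a,b_1,\dots,b_t,c_1,\dots,c_t$ where $a$ is adjacent to every $b_i$ and to no $c_i$, $\{b_1,\dots,b_t\}$ is stable, $\{c_1,\dots,c_t\}$ is a clique, and $b_ic_j$ is an edge iff $i=j$. A graph is anticonnected if its complement is connected. A vertex is simplicial if its neighbours form a (possibly empty) clique, universal if adjacent to all other vertices. For disjoint vertex sets $X,Y$, $X$ is complete (anticomplete) to $Y$ if every vertex of $X$ is adjacent (nonadjacent) to every vertex of $Y$. $t$-villa: a graph whose vertex set partitions into nonempty cliques $A,B_1,\dots,B_t,C_1,\dots,C_t$ such that $A$ is complete to $B_1\cup\dots\cup B_t$ and anticomplete to $C_1\cup\dots\cup C_t$; the $B_i$ are pairwise anticomplete; the $C_i$ are pairwise complete; $B_i$ is anticomplete to $C_j$ for $i\ne j$; each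 $B_i$ can be ordered $b^i_1,\dots,b^i_{r_i}$ with $\emptyset\ne N(b^i_{r_i})\cap C_i\subseteq\dots\subseteq N(b^i_1)\cap C_i=C_i$; this is a $t$-villa partition $(A;B_1,\dots,B_t;C_1,\dots,C_t)$. $t$-mansion: a graph $Q$ whose vertex set partitions into cliques $A,B_1,\dots,B_t,C_1,\dots,C_t,F,X,Y$, with $A,B_i,C_i,F$ nonempty ($X,Y$ possibly empty), such that $Q[A\cup B_1\cup\dots\cup B_t\cup C_1\cup\dots\cup C_t]$ is a $t$-villa with $t$-villa partition $(A;B_1,\dots,B_t;C_1,\dots,C_t)$; there is $j^*\in\{1,\dots,t\}$ such that $F$ is complete to $A$, to $\bigcup_{i\ne j^*}B_i$ and to $\bigcup_{i\ne j^*}C_i$ and anticomplete to $B_{j^*}\cup C_{j^*}$, $B_{j^*}$ is complete to $C_{j^*}$, and $X$ is complete to $A\cup B_{j^*}$ and anticomplete to $\bigcup_{i\ne j^*}B_i$ and to $C_1\cup\dots\cup C_t$; $F$ is complete to $X\cup Y$; $X$ is anticomplete to $Y$; $Y$ is complete to $C_1\cup\dots\cup C_t$ and anticomplete to $A\cup B_1\cup\dots\cup B_t$. *)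

(* Simple graphs: symmetric irreflexive e : rel T, T : finType. *)
From mathcomp Require Import all_boot.
Set Implicit Arguments. Unset Strict Implicit. Unset Printing Implicit Defensive.

Section Graphs.
Variables (T : finType) (e : rel T).

Definition clique (S : {set T}) : Prop :=
  forall x y, x \in S -> y \in S -> x != y -> e x y.

Definition complete (X Y : {set T}) : Prop :=
  forall x y, x \in X -> y \in Y -> e x y.

Definition anticomplete (X Y : {set T}) : Prop :=
  forall x y, x \in X -> y \in Y -> ~~ e x y.

Definition has_induced (V : finType) (eH : rel V) : Prop :=
  exists f : V -> T, injective f /\ forall x y, e (f x) (f y) = eH x y.

Definition complement_rel : rel T := fun x y => (x != y) && ~~ e x y.

Definition anticonnected : Prop :=
  forall x y : T, connect complement_rel x y.

Definition simplicial (x : T) : Prop :=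
  forall y z, e x y -> e x z -> y != z -> e y z.

Definition universal (x : T) : Prop :=
  forall y, y != x -> e x y.

End Graphs.

Definition edge_rel (k : nat) (s : seq (nat * nat)) : rel 'I_k :=
  fun x y => (((x : nat), (y : nat)) \in s) || (((y : nat), (x : nat)) \in s).

Definition twoP3 : rel 'I_6 := @edge_rel 6 [:: (0,1); (1,2); (3,4); (4,5)]%N.

Definition cycle_rel (k : nat) : rel 'I_k :=
  fun x y => ((x.+1 %% k)%N == y) || ((y.+1 %% k)%N == x).

(* T0 with p=0, q=1, u0=2, u1=3, u2=4, u3=5, w1=6, w2=7, w3=8 *)
Definition T0 : rel 'I_9 := @edge_rel 9
  [:: (0,1); (0,2); (0,4); (0,5); (1,3); (1,4); (1,5); (2,6); (3,6); (4,7);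
      (5,8); (6,7); (6,8); (7,8)]%N.

(* t-pentagon: None = a, Some (inl i) = b_i, Some (inr i) = c_i *)
Definition pentagon_rel (t : nat) : rel (option ('I_t + 'I_t)) :=
  fun x y =>
    match x, y with
    | None, Some (inl _) => true
    | Some (inl _), None => true
    | Some (inr i), Some (inr j) => i != j
    | Some (inl i), Some (inr j) => i == j
    | Some (inr i), Some (inl j) => i == j
    | _, _ => false
    end.

Inductive mlabel (t : nat) :=
  LA | LB of 'I_t | LC of 'I_t | LF | LX | LY.

Section Mansion.
Variables (T : finType) (e : rel T) (t : nat).

Definition nbr_in (b : T) (S : {set T}) : {set T} := [set c in S | e b c].

(* The partition is given by the labelling lab : T -> mlabel t;
   the parts are the preimages of the labels. *)
Definition mansion (lab : T -> mlabel t) (jstar : 'I_t) : Prop :=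
  let A := [set x | if lab x is LA then true else false] in
  let B := fun i => [set x | if lab x is LB k then k == i else false] in
  let C := fun i => [set x | if lab x is LC k then k == i else false] in
  let F := [set x | if lab x is LF then true else false] in
  let X := [set x | if lab x is LX then true else false] in
  let Y := [set x | if lab x is LY then true else false] in
  [/\
      (clique e A /\ (forall i, clique e (B i)) /\ (forall i, clique e (C i)) /\
          clique e F /\ clique e X /\ clique e Y),
      [/\ A != set0, (forall i, B i != set0), (forall i, C i != set0) & F != set0],
      ((forall i, complete e A (B i)) /\ (forall i, anticomplete e A (C i)) /\
          (forall i j, i != j -> anticomplete e (B i) (B j)) /\
          (forall i j, i != j -> complete e (C i) (C j)) /\
          (forall i j, i != j -> anticomplete e (B i) (C j)) /\
          (forall i, exists (b1 : T) (s : seq T),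
             [/\ perm_eq (b1 :: s) (enum (B i)),
                 path (fun b b' => nbr_in b' (C i) \subset nbr_in b (C i)) b1 s,
                 nbr_in b1 (C i) = C i &
                 nbr_in (last b1 s) (C i) != set0])),
      (complete e F A /\
          (forall i, i != jstar -> complete e F (B i)) /\
          (forall i, i != jstar -> complete e F (C i)) /\
          anticomplete e F (B jstar :|: C jstar) /\
          complete e (B jstar) (C jstar) /\
          complete e X (A :|: B jstar) /\
          (forall i, i != jstar -> anticomplete e X (B i)) /\
          (forall i, anticomplete e X (C i))) &
      [/\ complete e F (X :|: Y), anticomplete e X Y,
          (forall i, complete e Y (C i)) &
          (forall i, anticomplete e Y (A :|: B i))]].

End Mansion.

Definition is_mansion (T : finType) (e : rel T) (t : nat) : Prop :=
  exists (lab : T -> mlabel t) (jstar : 'I_t), mansion e lab jstar.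

From HB Require Import structures.
From mathcomp Require Import all_boot zmodp.
Set Implicit Arguments. Unset Strict Implicit. Unset Printing Implicit Defensive.

(* Adjacency in a t-mansion is a function of the parts of the two vertices,
   except between B_i and C_i for i <> j*, where the villa ordering nests the
   neighbourhoods in C_i, so that B_i u C_i contains no induced 2K2.  An induced
   copy of a graph H thus labels V(H) with parts respecting every adjacency of
   H that the parts determine, with no crossing 2K2; since only which vertices
   share an index i matters, indices can be numbered by first occurrence and
   all such labellings enumerated.  A finite search, evaluated by the kernel,
   finds none for 2P3, C4, C6, C7 and T0.  The other claims need explicit
   vertices only: a in A, a vertex of each B_i complete to C_i and a vertex of
   each C_i induce a t-pentagon, and every part has a non-neighbouring part, two
   nonadjacent neighbouring parts, and a path in the complement to C_j*. *)

(* [pB u] and [pC u] stand for B_i and C_i with i <> j*; the slot u only records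
   which vertices share their index. *)
Inductive part := pA | pF | pX | pY | pBj | pCj | pB of nat | pC of nat.

Definition part_code (p : part) : nat * nat :=
  match p with
  | pA => (0, 0) | pF => (1, 0) | pX => (2, 0) | pY => (3, 0)
  | pBj => (4, 0) | pCj => (5, 0) | pB u => (6, u) | pC u => (7, u)
  end.

Definition part_decode (c : nat * nat) : option part :=
  match c with
  | (0, _) => Some pA | (1, _) => Some pF | (2, _) => Some pX | (3, _) => Some pY
  | (4, _) => Some pBj | (5, _) => Some pCj | (6, u) => Some (pB u)
  | (7, u) => Some (pC u) | _ => None
  end.

Lemma part_codeK : pcancel part_code part_decode. Proof. by case. Qed.
HB.instance Definition _ := Equality.copy part (pcan_type part_codeK).

(* [None]: adjacency between B_i and C_i is not determined by the parts. *)
Definition part_adj (p q : part) : option bool :=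
  match p, q with
  | pB u, pB w => Some (u == w)
  | pC _, pC _ => Some true
  | pB u, pC w | pC w, pB u => if u == w then None else Some false
  | pA, (pA | pF | pX | pBj | pB _) | pF, (pA | pF | pX | pY | pB _ | pC _)
  | pX, (pA | pF | pX | pBj) | pY, (pF | pY | pCj | pC _)
  | pBj, (pA | pX | pBj | pCj) | pCj, (pY | pBj | pCj | pC _)
  | pB _, (pA | pF) | pC _, (pF | pY | pCj) => Some true
  | _, _ => Some false
  end.

Lemma part_adj_refl p : part_adj p p = Some true.
Proof. by case: p => //= u; rewrite eqxx. Qed.

Definition compatible (p q : part) (adj : bool) : bool :=
  if part_adj p q is Some b then adj == b else true.

Lemma sorted_comparable (T : eqType) (R : rel T) s :
  transitive R -> reflexive R -> sorted R s ->
  {in s &, forall x y, R x y || R y x}.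
Proof.
move=> Rtr Rrefl Rs x y xs ys; case: (leqP (index x s) (index y s)) => [|/ltnW] le.
  by rewrite (sorted_leq_index Rtr Rrefl Rs _ _ xs ys le).
by rewrite (sorted_leq_index Rtr Rrefl Rs _ _ ys xs le) orbT.
Qed.

Lemma path_rel_last (T : eqType) (R : rel T) x s :
  transitive R -> reflexive R -> path R x s -> {in x :: s, forall y, R y (last x s)}.
Proof.
move=> Rtr Rrefl; elim: s x => [|z s IH] x /=; first by move=> _ y /[!inE] /eqP ->.
move=> /andP[xz zs] y /[!inE] /orP[/eqP -> | ys]; last exact: IH.
exact: Rtr xz (IH z zs z (mem_head _ _)).
Qed.

Lemma ord_exists_neq n (j : 'I_n) : 1 < n -> exists i : 'I_n, i != j.
Proof.
move=> n_gt1; have [->|] := eqVneq j (Ordinal (ltnW n_gt1)); first by exists (Ordinal n_gt1).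
by exists (Ordinal (ltnW n_gt1)); rewrite eq_sym.
Qed.

Section Search.
Variable H : nat -> nat -> bool.

(* A new B/C vertex opens the slot named after its own position or reuses a slot
   opened earlier, so slots are numbered canonically. *)
Definition slot_ok (ls : seq part) (u : nat) : bool :=
  (u == size ls) || (nth pA ls u \in [:: pB u; pC u]).

Definition candidates (ls : seq part) : seq part :=
  [:: pA; pF; pX; pY; pBj; pCj] ++
  flatten [seq [:: pB u; pC u] | u <- iota 0 (size ls).+1 & slot_ok ls u].

Definition consistent (ls : seq part) (p : part) : bool :=
  all (fun u => compatible (nth pA ls u) p (H u (size ls))) (iota 0 (size ls)).

Definition crossing (ls : seq part) (b b' c c' : nat) : bool :=
  if nth pA ls b is pB u then
    [&& nth pA ls b' == pB u, nth pA ls c == pC u, nth pA ls c' == pC u,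
        H b c && H b' c' & ~~ (H b c' || H b' c)]
  else false.

Definition nested (ls : seq part) : bool :=
  let V := iota 0 (size ls) in
  all (fun b => all (fun b' => all (fun c => all (fun c' =>
    ~~ crossing ls b b' c c') V) V) V) V.

Definition admissible (ls : seq part) : bool :=
  nested ls && all (fun v => let p := nth pA ls v in
    (p \in candidates (take v ls)) && consistent (take v ls) p) (iota 0 (size ls)).

(* The [if] (rather than [&&]) keeps the pruning effective under [vm_compute]. *)
Fixpoint extendable (k : nat) (ls : seq part) : bool :=
  if k is k'.+1 then
    has (fun p => if consistent ls p then extendable k' (rcons ls p) else false)
      (candidates ls)
  else nested ls.

Lemma admissible_extendable ls : admissible ls -> extendable (size ls) [::].
Proof.
case/andP=> nest /allP ok; rewrite -(take0 ls).
suff ext d m : m + d = size ls -> extendable d (take m ls) by apply: ext.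
elim: d m => [|d IH] m; first by rewrite addn0 => ->; rewrite take_size.
move=> md; have m_lt : m < size ls by rewrite -md addnS ltnS leq_addr.
have := ok m; rewrite mem_iota m_lt => /(_ isT) /andP[cand cons].
apply/hasP; exists (nth pA ls m) => //; rewrite cons -take_nth //.
by apply: IH; rewrite addSnnS.
Qed.

End Search.

(* [inZp] rather than [inord], which does not compute. *)
Definition fits_mansion n (eH : rel 'I_n.+1) : bool :=
  extendable (fun u v => eH (inZp u) (inZp v)) n.+1 [::].

Section MansionParts.
Variables (T : finType) (e : rel T) (t : nat) (lab : T -> mlabel t) (J : 'I_t).
Hypotheses (esym : symmetric e) (M : mansion e lab J).

Definition part_of (sl : 'I_t -> nat) (x : T) : part :=
  match lab x with
  | LA => pA | LF => pF | LX => pX | LY => pY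
  | LB i => if i == J then pBj else pB (sl i)
  | LC i => if i == J then pCj else pC (sl i)
  end.

Ltac in_parts := rewrite ?inE /=;
  repeat match goal with h : lab _ = _ |- _ => rewrite h end;
  rewrite /= ?eqxx ?orbT //; by rewrite eq_sym.

(* Index instances are tried explicitly so that no index is left as an evar. *)
Ltac by_condition :=
  let try_cond h :=
    lazymatch type of h with
    | forall _ : ?A, _ => lazymatch type of A with Prop => idtac end
    | _ => idtac
    end;
    first [ apply: h; solve [in_parts] | rewrite esym; apply: h; solve [in_parts] ] in
  match goal with
  | h : _ |- _ => try_cond h
  | h : _, i : ?I |- _ => unify I 'I_t; try_cond (h i)
  | h : _, i : ?I, j : ?I |- _ => unify I 'I_t; try_cond (h i j)
  end.

Ltac unfold_mansion :=
  move: (M) => [[cA [cB [cC [cF [cX cY]]]]] _ [AB [AC [BB [CC [BC _]]]]]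
    [FA [FB [FC [FBC [BCJ [XAB [XB XC]]]]]]] [FXY XY YC YAB]].

Lemma mansion_part_adj sl x y b : injective sl -> x != y ->
  part_adj (part_of sl x) (part_of sl y) = Some b -> e x y = b.
Proof.
move=> slI xy; unfold_mansion.
rewrite /part_of; case hx: (lab x) => [|i|i|||]; case hy: (lab y) => [|j|j|||];
  try case: (eqVneq i J) hx => [-> {i} | iJ] hx;
  try case: (eqVneq j J) hy => [-> {j} | jJ] hy;
  rewrite /= ?(inj_eq slI); try case: (eqVneq i j) hx => [-> {iJ i} | ij] hx;
  move=> // -[<-]; try apply/negbTE; by_condition.
Qed.

Lemma part_of_pB sl x u : part_of sl x = pB u ->
  exists i, [/\ lab x = LB i, i != J & sl i = u].
Proof. by rewrite /part_of; case: (lab x) => // i; case: eqVneq => // iJ [<-]; exists i. Qed.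

Lemma part_of_pC sl x u : part_of sl x = pC u ->
  exists i, [/\ lab x = LC i, i != J & sl i = u].
Proof. by rewrite /part_of; case: (lab x) => // i; case: eqVneq => // iJ [<-]; exists i. Qed.

Lemma mansion_has_A : exists a, lab a = LA t.
Proof.
have [_ [/set0Pn[a +] _ _ _] _ _ _] := M.
by rewrite inE; case ha: (lab a) => // _; exists a.
Qed.

Lemma mansion_has_F : exists f, lab f = LF t.
Proof.
have [_ [_ _ _ /set0Pn[f +]] _ _ _] := M.
by rewrite inE; case hf: (lab f) => // _; exists f.
Qed.

Lemma mansion_has_C i : exists c, lab c = LC i.
Proof.
have [_ [_ _ /(_ i)/set0Pn[c +] _] _ _ _] := M.
by rewrite inE; case hc: (lab c) => [|k|k|||] // /eqP ki; exists c; rewrite hc ki.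
Qed.

Section Chain.
Variable i : 'I_t.

Let Ci := [set x | if lab x is LC k then k == i else false].
Let nbr_le b b' := nbr_in e b' Ci \subset nbr_in e b Ci.

Let nbr_le_trans : transitive nbr_le.
Proof. by move=> b b1 b2 h1 h2; apply: subset_trans h2 h1. Qed.

Let nbr_le_refl : reflexive nbr_le.
Proof. by move=> b; apply: subxx. Qed.

Let chain : exists b1 s, [/\ {in b1 :: s, forall x, lab x = LB i},
  forall x, lab x = LB i -> x \in b1 :: s, path nbr_le b1 s,
  nbr_in e b1 Ci = Ci & nbr_in e (last b1 s) Ci != set0].
Proof.
have [_ _ [_ [_ [_ [_ [_ /(_ i)[b1 [s [bs path_s Nb1 Nlast]]]]]]]] _ _] := M.
by exists b1, s; split=> // x; rewrite (perm_mem bs) mem_enum inE;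
  [case: (lab x) => // k /eqP -> | move=> ->].
Qed.

Lemma mansion_B_complete_C :
  exists b, lab b = LB i /\ forall c, lab c = LC i -> e b c.
Proof.
have [b [s [inB _ _ Nb _]]] := chain; exists b; split; first exact/inB/mem_head.
move=> c hc; have : c \in nbr_in e b Ci by rewrite Nb inE hc.
by rewrite inE => /andP[].
Qed.

Lemma mansion_B_nbr_C x : lab x = LB i -> exists c, lab c = LC i /\ e x c.
Proof.
move=> hx; have [b [s [_ Bin path_s _ /set0Pn[c]]]] := chain.
have /subsetP/(_ c) := path_rel_last nbr_le_trans nbr_le_refl path_s (Bin x hx).
rewrite !inE; case hc: (lab c) => [|k|k|||] //= sub /sub /andP[/eqP ki xc].
by exists c; rewrite hc ki.
Qed.

Lemma mansion_B_nested x x' c c' :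
  lab x = LB i -> lab x' = LB i -> lab c = LC i -> lab c' = LC i ->
  e x c -> e x' c' -> e x c' || e x' c.
Proof.
move=> hx hx' hc hc' xc x'c'; have [b [s [_ Bin path_s _ _]]] := chain.
have /orP[] := sorted_comparable nbr_le_trans nbr_le_refl (path_s : sorted _ (b :: s))
  (Bin x hx) (Bin x' hx') => /subsetP sub.
- by have := sub c'; rewrite !inE hc' eqxx x'c' => /(_ isT) /andP[_ ->].
- by have := sub c; rewrite !inE hc eqxx xc orbC => /(_ isT) /andP[_ ->].
Qed.

End Chain.

Lemma mansion_nonadjacent sl x y : injective sl ->
  part_adj (part_of sl x) (part_of sl y) = Some false -> complement_rel e x y.
Proof.
move=> slI pxy; have xy : x != y by apply/eqP => xy; move: pxy; rewrite xy part_adj_refl.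
by rewrite /complement_rel xy (mansion_part_adj slI xy pxy).
Qed.

Lemma mansion_adjacent sl x y : injective sl -> part_of sl x != part_of sl y ->
  part_adj (part_of sl x) (part_of sl y) = Some true -> e x y.
Proof. by move=> slI pxy; apply: mansion_part_adj slI _; apply: contraNneq pxy => ->. Qed.

Local Notation part := (part_of val).

Lemma mansion_part_witnesses : exists a f bj cj,
  [/\ part a = pA, part f = pF, part bj = pBj & part cj = pCj].
Proof.
have [a ha] := mansion_has_A; have [f hf] := mansion_has_F.
have [bj [hbj _]] := mansion_B_complete_C J; have [cj hcj] := mansion_has_C J.
by exists a, f, bj, cj; rewrite /part_of ha hf hbj hcj eqxx.
Qed.

Lemma mansion_no_universal x : ~ universal e x.
Proof.
have [a [f [bj [cj [pa pf pbj pcj]]]]] := mansion_part_witnesses.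
have [y /andP[xy nexy]] : exists y, complement_rel e x y.
  case px: (part x) => [||||||u|u];
    [exists cj | exists bj | exists cj | exists a | exists f | exists a | exists bj | exists a];
    by apply: (mansion_nonadjacent val_inj); rewrite px ?pa ?pf ?pbj ?pcj.
by move=> /(_ y); rewrite eq_sym xy (negbTE nexy) => /(_ isT).
Qed.

Lemma mansion_anticonnected : anticonnected e.
Proof.
have [a [f [bj [cj [pa pf pbj pcj]]]]] := mansion_part_witnesses.
have step y z : part_adj (part y) (part z) = Some false -> connect (complement_rel e) y z.
  by move=> pyz; apply/connect1/(mansion_nonadjacent val_inj).
have a_cj : connect (complement_rel e) a cj by apply: step; rewrite pa pcj.
have f_cj : connect (complement_rel e) f cj by apply: step; rewrite pf pcj.
suff to_cj y : connect (complement_rel e) y cj.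
  have sym : connect_sym (complement_rel e).
    by apply: sym_connect_sym => y z; rewrite /complement_rel eq_sym esym.
  by move=> y z; rewrite (connect_trans (to_cj y)) // sym.
case py: (part y) => [||||||u|u];
  by [ apply: step; rewrite py pcj
     | apply: connect_trans a_cj; apply: step; rewrite py pa
     | apply: connect_trans f_cj; apply: step; rewrite py pf ].
Qed.

Lemma mansion_no_simplicial x : 1 < t -> ~ simplicial e x.
Proof.
move=> t_gt1.
suff [y [z [xy xz /andP[yz /negP nyz]]]] :
    exists y z, [/\ e x y, e x z & complement_rel e y z].
  by move=> /(_ y z xy xz yz).
have [a [f [bj [cj [pa pf pbj pcj]]]]] := mansion_part_witnesses.
have [i iJ] := ord_exists_neq J t_gt1.
have [b [hb _]] := mansion_B_complete_C i; have [c hc] := mansion_has_C i.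
have pb : part b = pB i by rewrite /part_of hb (negbTE iJ).
have pc : part c = pC i by rewrite /part_of hc (negbTE iJ).
have by_parts y z : [&& part x != part y, part x != part z,
    part_adj (part x) (part y) == Some true, part_adj (part x) (part z) == Some true &
    part_adj (part y) (part z) == Some false] ->
  exists y z, [/\ e x y, e x z & complement_rel e y z].
  case/and5P=> pxy pxz /eqP xy /eqP xz /eqP yz; exists y, z.
  by split; [exact: mansion_adjacent val_inj pxy xy
            | exact: mansion_adjacent val_inj pxz xz | exact: mansion_nonadjacent val_inj yz].
case px: (part x) => [||||||u|u].
- by apply: (by_parts bj b); rewrite px pbj pb.
- by apply: (by_parts a c); rewrite px pa pc.
- by apply: (by_parts bj f); rewrite px pbj pf.
- by apply: (by_parts f cj); rewrite px pf pcj.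
- by apply: (by_parts a cj); rewrite px pa pcj.
- by apply: (by_parts bj c); rewrite px pbj pc.
- have [k [hx kJ ku]] := part_of_pB px; rewrite -ku in px.
  have [c' [hc' xc']] := mansion_B_nbr_C hx.
  have pc' : part c' = pC k by rewrite /part_of hc' (negbTE kJ).
  exists a, c'; split=> //; last by apply: (mansion_nonadjacent val_inj); rewrite pa pc'.
  by apply: (mansion_adjacent val_inj); rewrite px pa.
- have [k [hx kJ ku]] := part_of_pC px; rewrite -ku in px.
  have [b' [hb' b'C]] := mansion_B_complete_C k.
  have pb' : part b' = pB k by rewrite /part_of hb' (negbTE kJ).
  exists b', cj; split; first by rewrite esym b'C.
    by apply: (mansion_adjacent val_inj); rewrite px pcj.
  by apply: (mansion_nonadjacent val_inj); rewrite pb' pcj.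
Qed.

Lemma mansion_induced_pentagon : irreflexive e -> has_induced e (@pentagon_rel t).
Proof.
move=> eirr; have [a ha] := mansion_has_A.
have [b hb] := fin_all_exists mansion_B_complete_C.
have [c hc] := fin_all_exists mansion_has_C.
exists (fun o => match o with None => a | Some (inl i) => b i | Some (inr i) => c i end).
split.
  move=> [[i|i]|] [[j|j]|] //= /(congr1 lab);
    by rewrite ?ha ?(hb i).1 ?(hb j).1 ?hc // => -[->].
move=> [[i|i]|] [[j|j]|] /=; rewrite ?eirr //;
  try have [hbi bC] := hb i; try have hbj := (hb j).1;
  try have hci := hc i; try have hcj := hc j;
  try case: (eqVneq i j) => [<- | ij]; rewrite ?eirr ?eqxx //=;
  try apply/negbTE.
all: unfold_mansion; first [by_condition | by apply: bC | by rewrite esym; apply: bC].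
Qed.

Lemma mansion_compatible sl x y : injective sl -> x != y ->
  compatible (part_of sl x) (part_of sl y) (e x y).
Proof.
move=> slI xy; rewrite /compatible.
by case pxy: part_adj => [b|] //; rewrite (mansion_part_adj slI xy pxy).
Qed.

Definition part_index (x : T) : option 'I_t :=
  match lab x with LB i | LC i => if i == J then None else Some i | _ => None end.

Lemma part_of_index sl x i :
  part_index x = Some i -> part_of sl x \in [:: pB (sl i); pC (sl i)].
Proof.
rewrite /part_index /part_of; case: (lab x) => // k;
  by case: (k == J) => // -[->]; rewrite !inE eqxx ?orbT.
Qed.

Lemma part_of_noindex sl x :
  part_index x = None -> part_of sl x \in [:: pA; pF; pX; pY; pBj; pCj].
Proof. by rewrite /part_index /part_of; case: (lab x) => // k; case: (k == J). Qed.

Section Embedding.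
Variables (n : nat) (eH : rel 'I_n.+1) (f : 'I_n.+1 -> T).
Hypotheses (f_inj : injective f) (f_induced : forall x y, e (f x) (f y) = eH x y).

Let H u v := eH (inZp u) (inZp v).
Let g v := f (inZp v).
Let idxs := mkseq (fun v => part_index (g v)) n.+1 ++ [seq Some i | i <- enum 'I_t].
(* The slot of an index is its first position in the copy; the tail of [idxs]
   keeps [sl] injective on indices that do not occur. *)
Let sl (i : 'I_t) := index (Some i) idxs.
Let ls := mkseq (fun v => part_of sl (g v)) n.+1.

Let g_adj u v : e (g u) (g v) = H u v.
Proof. exact: f_induced. Qed.

Let g_neq u v : u < v -> v < n.+1 -> g u != g v.
Proof.
move=> uv vn; rewrite (inj_eq f_inj); apply/eqP => /(congr1 val) /=.
by rewrite !modn_small ?(ltn_trans uv) // => /eqP; rewrite ltn_eqF.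
Qed.

Let nth_idxs v : v < n.+1 -> nth None idxs v = part_index (g v).
Proof. by move=> vn; rewrite nth_cat size_mkseq vn nth_mkseq. Qed.

Let sl_inj : injective sl.
Proof.
have mem i : Some i \in idxs by rewrite mem_cat map_f ?mem_enum ?orbT.
by move=> i j /(index_inj None (mem i) (mem j)) [].
Qed.

Let sl_first v i : v < n.+1 -> part_index (g v) = Some i -> sl i <= v.
Proof.
move=> vn gi; rewrite leqNgt; apply/negP => /(before_find None).
by rewrite nth_idxs // gi /= eqxx.
Qed.

Let sl_index i : sl i < n.+1 -> part_index (g (sl i)) = Some i.
Proof.
move=> si; rewrite -nth_idxs // nth_index //.
by rewrite mem_cat map_f ?mem_enum ?orbT.
Qed.

Let nth_ls v : v < n.+1 -> nth pA ls v = part_of sl (g v).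
Proof. exact: nth_mkseq. Qed.

Let ls_nested : nested H ls.
Proof.
apply/allP => b; rewrite size_mkseq mem_iota => /andP[_ bn].
apply/allP => b' /[!mem_iota] /andP[_ b'n]; apply/allP => c /[!mem_iota] /andP[_ cn].
apply/allP => c' /[!mem_iota] /andP[_ c'n].
rewrite /crossing !nth_ls //; case pb: (part_of sl (g b)) => [||||||u|] //.
apply/negP => /and5P[/eqP pb' /eqP pc /eqP pc' /andP[bc b'c'] /negP]; apply.
have [i [hb _ si]] := part_of_pB pb; subst u.
have [i' [hb' _ /sl_inj ii']] := part_of_pB pb'.
have [k [hc _ /sl_inj ki]] := part_of_pC pc.
have [k' [hc' _ /sl_inj k'i]] := part_of_pC pc'.
rewrite ii' in hb'; rewrite ki in hc; rewrite k'i in hc'.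
by rewrite -!g_adj; apply: mansion_B_nested hb hb' hc hc' _ _; rewrite g_adj.
Qed.

Let ls_candidate v : v < n.+1 -> part_of sl (g v) \in candidates (take v ls).
Proof.
move=> vn; have sz : size (take v ls) = v by rewrite size_takel // size_mkseq ltnW.
case gi: (part_index (g v)) => [i|]; last by rewrite mem_cat part_of_noindex.
have si := sl_first vn gi.
have slot : slot_ok (take v ls) (sl i).
  rewrite /slot_ok sz; case: (ltngtP (sl i) v) si => // siv _.
  have sin : sl i < n.+1 by apply: ltn_trans vn.
  by rewrite nth_take // nth_ls // part_of_index ?sl_index ?orbT.
rewrite mem_cat; apply/orP; right; apply/flatten_mapP; exists (sl i).
  by rewrite mem_filter slot mem_iota sz ltnS si.
exact: part_of_index.
Qed.

Let ls_consistent v : v < n.+1 -> consistent H (take v ls) (part_of sl (g v)).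
Proof.
move=> vn; have sz : size (take v ls) = v by rewrite size_takel // size_mkseq ltnW.
apply/allP => u; rewrite sz mem_iota => /andP[_ uv].
rewrite nth_take // nth_ls ?(ltn_trans uv) // -g_adj.
exact: mansion_compatible sl_inj (g_neq uv vn).
Qed.

Lemma induced_fits_mansion : fits_mansion eH.
Proof.
have := @admissible_extendable H ls; rewrite size_mkseq; apply.
rewrite /admissible ls_nested; apply/allP => v; rewrite size_mkseq mem_iota => /andP[_ vn].
by rewrite nth_ls // ls_candidate // ls_consistent.
Qed.

End Embedding.

End MansionParts.

Theorem proposition5p4 (t : nat) (ht : (3 <= t)%N) (T : finType) (e : rel T)
  (esym : symmetric e) (eirr : irreflexive e) :
  is_mansion e t ->
  [/\ ~ has_induced e twoP3 /\
      ~ has_induced e (@cycle_rel 4) /\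
      ~ has_induced e (@cycle_rel 6) /\
      ~ has_induced e (@cycle_rel 7) /\
      ~ has_induced e T0,
      has_induced e (@pentagon_rel t),
      anticonnected e,
      (forall x : T, ~ simplicial e x) &
      (forall x : T, ~ universal e x)].
Proof.
move=> [lab [J M]]; have t_gt1 : 1 < t by apply: leq_trans ht.
have no_copy n (eH : rel 'I_n.+1) : fits_mansion eH = false -> ~ has_induced e eH.
  by move=> unfit [f [f_inj f_ind]]; rewrite (induced_fits_mansion esym M f_inj f_ind) in unfit.
split.
- by do !split; apply: no_copy; vm_compute.
- exact: mansion_induced_pentagon esym M eirr.
- exact: mansion_anticonnected esym M.
- by move=> x; apply: mansion_no_simplicial esym M x t_gt1.
- exact: mansion_no_universal esym M.
Qed.
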